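(* Let $1\le k<n$ and let $X$ be a fixed real $n\times k$ matrix of full column rank $k$. Let $\mathbf{F}_2^0$ be the class of all distributions $F$ of $Y=X\beta+e$ in $\mathbb{R}^n$, where $\beta$ ranges over $\mathbb{R}^k$ and the distribution of $e$ ranges over all distributions on $\mathbb{R}^n$ with $Ee=0$ and $Eee'=\sigma^2 I_n$ for some $0<\sigma^2<\infty$; write $\beta(F)$ for the corresponding $\beta$ and $e=Y-X\beta(F)$ for the error vector under $F$. Let $\hat\beta_{OLS}=(X'X)^{-1}X'Y$, let $H_1,\dots,H_k$ be symmetric real $n\times n$ matrices with $\operatorname{tr}(H_i)=0$ and $X'H_iX=0$ for $i=1,\dots,k$, and for $\alpha\in\mathbb{R}$ define $$\hat\beta_\alpha=\hat\beta_{OLS}+\alpha\,(Y'H_1Y,\dots,Y'H_kY)'.$$ Write $Q=(Y'H_1Y,\dots,Y'H_kY)'$. Then: (a) $E_F(\hat\beta_\alpha)=\beta(F)$ for all $F\in\mathbf{F}_2^0$ and all $\alpha\in\mathbb{R}$. (b) If $\operatorname{Cov}_F(c'\hat\beta_{OLS},c'Q)\neq 0$ for some $c\in\mathbb{R}^k$ and some $F\in\mathbf{F}_2^0$ under which $Y$ has finite fourth moments, then there exists $\alpha\in\mathbb{R}$ such that $\operatorname{Var}_F(c'\hat\beta_\alpha)<\operatorname{Var}_F(c'\hat\beta_{OLS})$. (c) For every $c\in\mathbb{R}^k$ and every $F\in\mathbf{F}_2^0$ with finite fourth moments and $\beta(F)=0$, $$\operatorname{Cov}_F(c'\hat\beta_{OLS},c'Q)=\sum_{j=1}^n\sum_{l=1}^n\sum_{m=1}^n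 d_j\Big(\sum_{i=1}^k c_i h_{lm}(i)\Big)E_F(e_je_le_m),$$ where $d=(d_1,\dots,d_n)'=X(X'X)^{-1}c$ and $h_{lm}(i)$ is the $(l,m)$-th entry of $H_i$. (d) For every $c\in\mathbb{R}^k$ and every $F\in\mathbf{F}_2^0$ with finite fourth moments under which $\beta(F)=0$ and the coordinates $e_1,\dots,e_n$ of $e$ are independent, $$\operatorname{Cov}_F(c'\hat\beta_{OLS},c'Q)=\sum_{j=1}^n d_j\Big(\sum_{i=1}^k c_i h_{jj}(i)\Big)E_F(e_j^3),$$ with $d$ and $h_{jj}(i)$ as in (c).
   Context: $E_F$, $\operatorname{Var}_F$, $\operatorname{Cov}_F$ denote expectation, variance and covariance when $Y$ has distribution $F$. *)

From HB Require Import structures.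
From mathcomp Require Import all_boot all_order all_algebra.
From mathcomp Require Import all_classical all_reals all_analysis.
Set Implicit Arguments.
Unset Strict Implicit.
Unset Printing Implicit Defensive.
Import Order.TTheory GRing.Theory Num.Theory.
Local Open Scope classical_set_scope.
Local Open Scope ring_scope.

(* A distribution F in F_2^0 is represented by a probability space (T,P),
   a parameter beta(F) : 'cV_k and an error vector e = (e_1,...,e_n) of
   real random variables; then Y = X beta + e. *)
Section Model.
Context {R : realType} {n k : nat} (X : 'M[R]_(n, k)) (H : 'I_k -> 'M[R]_n).
Context {d : measure_display} {T : measurableType d} (P : probability T R).
Context (beta : 'cV[R]_k) (e : 'I_n -> T -> R).

Definition errvec (t : T) : 'cV[R]_n := \col_i e i t.

Definition Yobs (t : T) : 'cV[R]_n := X *m beta + errvec t.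

(* e has a distribution with E e = 0 and E e e' = sigma^2 I_n, 0 < sigma^2
   (finite second moments; measurability is part of membership in Lfun). *)
Definition in_F20 : Prop :=
  [/\ (forall i, e i \in Lfun P 2%:E),
      (forall i, ('E_P[e i] = 0)%E) &
      exists sigma2 : R, 0 < sigma2 /\
        forall i j, ('E_P[fun t => (e i t * e j t)%R] =
                    (if i == j then sigma2 else 0)%:E)%E].

Definition fourth_moments : Prop :=
  forall i, (fun t => Yobs t i 0) \in Lfun P 4%:E.

Definition betaOLS (t : T) : 'cV[R]_k := invmx (X^T *m X) *m X^T *m Yobs t.

Definition Qvec (t : T) : 'cV[R]_k := \col_i ((Yobs t)^T *m H i *m Yobs t) 0 0.

Definition betaAlpha (a : R) (t : T) : 'cV[R]_k := betaOLS t + a *: Qvec t.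

End Model.

Definition lincomb {R : realType} {k : nat} (c v : 'cV[R]_k) : R := (c^T *m v) 0 0.

Definition mutually_independent {R : realType} {d : measure_display}
  {T : measurableType d} (P : probability T R) {n : nat} (f : 'I_n -> T -> R) : Prop :=
  forall B : 'I_n -> set R, (forall i, measurable (B i)) ->
    P (\bigcap_(i in [set: 'I_n]) (f i @^-1` B i)) =
    (\prod_(i < n) P (f i @^-1` B i))%E.

(* With u = X beta we have Y = u + e and E[Y_l Y_m] = u_l u_m + sigma^2 [l = m],
   so E[Y' H_i Y] = u' H_i u + sigma^2 tr H_i = 0 because X' H_i X = 0 and
   tr H_i = 0, while (X'X)^-1 X' u = beta: this is unbiasedness.
   Var(A + a B) = Var A + 2 a Cov(A, B) + a^2 Var B falls below Var A for
   a = -Cov(A, B) / (Var B + 1) whenever Cov(A, B) <> 0.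
   When beta = 0, c' beta_OLS = d' e is centred, so the covariance is
   E[(d' e) (e' G e)] with G = sum_i c_i H_i, which expands trilinearly.
   Under independence E[e_j e_l e_m] vanishes off the diagonal j = l = m,
   because some index then occurs exactly once and E e_a = 0.  The product
   rule E[prod_i phi_i(e_i)] = prod_i E[phi_i(e_i)] behind this follows from
   the definition of independence for indicators, by multilinearity for simple
   functions, by monotone convergence of dyadic approximations for nonnegative
   phi_i, and by splitting into positive and negative parts in general. *)

From HB Require Import structures.
From mathcomp Require Import all_boot all_order all_algebra.
From mathcomp Require Import all_classical all_reals all_analysis.
From mathcomp Require Import measurable_realfun measurable_fun_approximation.
From mathcomp Require Import ring lra.
Set Implicit Arguments.
Unset Strict Implicit.
Unset Printing Implicit Defensive.

Import Order.TTheory GRing.Theory Num.Theory.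
Import numFieldNormedType.Exports.
Local Open Scope classical_set_scope.
Local Open Scope ring_scope.

Lemma norm_exprn_le1D4 {R : realFieldType} (y : R) k :
  (k <= 4)%N -> `|y ^+ k| <= 1 + y ^+ 4.
Proof.
move=> k4; rewrite normrX.
have y4 : y ^+ 4 = `|y| ^+ 4 by rewrite -normrX ger0_norm// exprn_even_ge0.
have [y1|y1] := leP `|y| 1.
  by rewrite (le_trans (exprn_ile1 _ _ y1))// lerDl y4 exprn_ge0.
have : `|y| ^+ k <= `|y| ^+ 4.
  by rewrite -(subnK k4) exprD ler_peMl ?exprn_ge0 ?exprn_ege1// ltW.
rewrite y4; lra.
Qed.

Section Lfun_probability.
Context {d : measure_display} {T : measurableType d} {R : realType}
  (P : probability T R).

Lemma LfunD p (p1 : (1 <= p)%E) (f g : T -> R) :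
  f \in Lfun P p -> g \in Lfun P p -> (fun t => f t + g t) \in Lfun P p.
Proof. by move=> hf hg; have := rpredD hf hg; exact. Qed.

Lemma LfunZ p (p1 : (1 <= p)%E) (a : R) (f : T -> R) :
  f \in Lfun P p -> (fun t => a * f t) \in Lfun P p.
Proof. by move=> hf; have := rpredZ a hf; exact. Qed.

Lemma Lfun_sum p (p1 : (1 <= p)%E) (I : Type) (r : seq I) (F : I -> T -> R) :
  (forall i, F i \in Lfun P p) -> (fun t => \sum_(i <- r) F i t) \in Lfun P p.
Proof.
move=> hF; elim: r => [|a r IH].
  by under eq_fun do rewrite big_nil; have := @rpred0 _ (Lfun P p); exact.
by under eq_fun do rewrite big_cons; exact: LfunD.
Qed.

Lemma Lfun_measurable {p} {f : T -> R} : f \in Lfun P p -> measurable_fun setT f.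
Proof. by case/andP; rewrite inE. Qed.

Lemma Lfun1_dominated (f g : T -> R) : measurable_fun setT f ->
  (forall t, `|f t| <= g t) -> g \in Lfun P 1 -> f \in Lfun P 1.
Proof.
move=> mf fg /Lfun1_integrable ig; apply/Lfun1_integrable.
apply: (le_integrable _ _ _ ig) => //; first exact/measurable_EFinP.
by move=> t _ /=; rewrite lee_fin (le_trans (fg t)) ?ler_norm.
Qed.

Lemma Lfun1_indic (A : set T) : measurable A -> \1_A \in Lfun P 1.
Proof. by move=> mA; apply/Lfun1_integrable; exact: integrable_indic. Qed.

Lemma ge0_Lfun1 (f : T -> R) (x : R) : measurable_fun setT f ->
  (forall t, 0 <= f t) -> ('E_P[f] = x%:E)%E -> f \in Lfun P 1.
Proof.
move=> mf f0 hE; apply/Lfun1_integrable/integrableP; split.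
  exact/measurable_EFinP.
have -> : (\int[P]_t `|(EFin \o f) t|)%E = ('E_P[f])%E.
  by rewrite unlock; apply: eq_integral => t _ /=; rewrite ger0_norm.
by rewrite hE ltry.
Qed.

Lemma Lfun2_sqr (f : T -> R) : measurable_fun setT f ->
  (fun t => f t ^+ 2) \in Lfun P 1 -> f \in Lfun P 2%:E.
Proof.
move=> mf /Lfun1_integrable /integrableP[_ h].
rewrite inE; apply/andP; split; first by rewrite inE.
rewrite inE /finite_norm unlock /=; apply: poweR_lty.
apply: le_lt_trans h; rewrite le_eqVlt; apply/orP; left; apply/eqP.
by apply: eq_integral => t _ /=; rewrite powR_mulrn// normrX.
Qed.

Lemma Lfun4_Lfun2 (f : T -> R) : f \in Lfun P 4%:E -> f \in Lfun P 2%:E.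
Proof.
apply: Lfun_subset; rewrite ?lee1n ?lee_fin ?ler_nat//.
exact: fin_num_measure.
Qed.

Lemma Lfun2_Lfun1 (f : T -> R) : f \in Lfun P 2%:E -> f \in Lfun P 1.
Proof. by apply: Lfun_subset12; exact: fin_num_measure. Qed.

Lemma Lfun4_exp4 (f : T -> R) :
  f \in Lfun P 4%:E -> (fun t => f t ^+ 4) \in Lfun P 1.
Proof.
move=> /(Lfun_integrable (ler1n _ 4)) h; apply/Lfun1_integrable.
move: h; apply: eq_integrable => // t _ /=.
by rewrite powR_mulrn// -normrX ger0_norm// exprn_even_ge0.
Qed.

Lemma Lfun4_exprn (f : T -> R) k : (k <= 4)%N ->
  f \in Lfun P 4%:E -> (fun t => f t ^+ k) \in Lfun P 1.
Proof.
move=> k4 hf; apply: (@Lfun1_dominated _ (fun t => 1 + f t ^+ 4)).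
- by apply: measurable_funX; exact: Lfun_measurable hf.
- by move=> t; exact: norm_exprn_le1D4.
- by apply: LfunD => //; [exact: Lfun_cst | exact: Lfun4_exp4].
Qed.

Lemma Lfun4_mul (f g : T -> R) : f \in Lfun P 4%:E -> g \in Lfun P 4%:E ->
  (fun t => f t * g t) \in Lfun P 2%:E.
Proof.
move=> hf hg; have mf := Lfun_measurable hf; have mg := Lfun_measurable hg.
apply: Lfun2_sqr; first exact: measurable_funM.
apply: (@Lfun1_dominated _ (fun t => f t ^+ 4 + g t ^+ 4)).
- by apply: measurable_funX; exact: measurable_funM.
- by move=> t; rewrite ger0_norm ?sqr_ge0//; set a := f t; set b := g t; nra.
- by apply: LfunD => //; exact: Lfun4_exp4.
Qed.

Lemma Lfun4_mul3 (f g h : T -> R) : f \in Lfun P 4%:E -> g \in Lfun P 4%:E ->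
  h \in Lfun P 4%:E -> (fun t => f t * g t * h t) \in Lfun P 1.
Proof.
move=> hf hg hh.
exact (Lfun2_mul_Lfun1 (Lfun4_mul hf hg) (Lfun4_Lfun2 hh)).
Qed.

End Lfun_probability.

Section real_expectation.
Context {d : measure_display} {T : measurableType d} {R : realType}
  (P : probability T R).

(* [fine] sends infinite expectations to 0, so [Ex] is only meaningful on L^1. *)
Definition Ex (f : T -> R) : R := fine ('E_P[f])%E.

Lemma expectationEx (f : T -> R) : f \in Lfun P 1 -> ('E_P[f] = (Ex f)%:E)%E.
Proof. by move=> hf; rewrite fineK// expectation_fin_num. Qed.

Lemma ExD (f g : T -> R) : f \in Lfun P 1 -> g \in Lfun P 1 ->
  Ex (fun t => f t + g t) = Ex f + Ex g.
Proof.
move=> hf hg; rewrite {1}/Ex -[fun t => _]/(f \+ g)%R.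
by rewrite expectationD// (expectationEx hf) (expectationEx hg).
Qed.

Lemma ExZ (a : R) (f : T -> R) : f \in Lfun P 1 ->
  Ex (fun t => a * f t) = a * Ex f.
Proof.
move=> hf; rewrite {1}/Ex.
have -> : (fun t => a * f t) = (a \o* f)%R by apply/funext => t /=; rewrite mulrC.
by rewrite expectationZl// (expectationEx hf).
Qed.

Lemma Ex_cst (c : R) : Ex (fun _ => c) = c.
Proof. by rewrite /Ex -[fun _ => c]/(cst c) expectation_cst. Qed.

Lemma Ex_indic (A : set T) : measurable A -> Ex (fun t => \1_A t) = fine (P A).
Proof. by move=> mA; rewrite /Ex -[fun t => _]/(\1_A : T -> R) expectation_indic. Qed.

Lemma Ex_sum (I : Type) (r : seq I) (F : I -> T -> R) :
  (forall i, F i \in Lfun P 1) ->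
  Ex (fun t => \sum_(i <- r) F i t) = \sum_(i <- r) Ex (F i).
Proof.
move=> hF; elim: r => [|a r IH].
  by under eq_fun do rewrite big_nil; rewrite big_nil Ex_cst.
by under eq_fun do rewrite big_cons; rewrite big_cons ExD ?IH ?Lfun_sum.
Qed.

Lemma cvg_expectation_nondecreasing (h : nat -> T -> R) (f : T -> R) :
  (forall N, measurable_fun setT (h N)) -> (forall N t, 0 <= h N t) ->
  (forall t, {homo (fun N => h N t) : m N / (m <= N)%N >-> m <= N}) ->
  (forall t, (fun N => h N t) @ \oo --> f t) ->
  ('E_P[h N] @[N --> \oo] --> 'E_P[f])%E.
Proof.
move=> mh h0 nd cv.
have := @cvg_monotone_convergence _ _ _ P setT measurableT (fun N t => (h N t)%:E).
have -> : (fun x => limn (fun N => (h N x)%:E)) = (fun x => (f x)%:E).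
  apply/funext => x; apply: cvg_lim => //.
  by apply/fine_cvgP; split; [exact: nearW | exact: cv].
rewrite unlock; apply.
- by move=> N; exact/measurable_EFinP.
- by move=> N x _; rewrite lee_fin.
- by move=> x _ m N mN; rewrite lee_fin; exact: nd.
Qed.

End real_expectation.

Section dyadic_approximation.
Context {R : realType} (phi : R -> R) (mphi : measurable_fun setT phi)
  (phi0 : forall y, 0 <= phi y).

Let mphiE : measurable_fun setT (EFin \o phi).
Proof. exact/measurable_EFinP. Qed.

Definition approxR (N : nat) : R -> R := approx setT (EFin \o phi) N.

Definition approx_size (N : nat) := (N * 2 ^ N)%N.

(* [approx] as one sum of indicators: index [k < N 2^N] carries the dyadic
   level [k 2^-N], the last index the level [N] on [{phi >= N}]. *)
Definition approx_coef (N : nat) (k : 'I_(approx_size N).+1) : R :=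
  if (k < approx_size N)%N then k%:R * 2 ^- N else N%:R.

Definition approx_set (N : nat) (k : 'I_(approx_size N).+1) : set R :=
  if (k < approx_size N)%N then dyadic_approx setT (EFin \o phi) N k
  else integer_approx setT (EFin \o phi) N.

Arguments approx_coef : clear implicits.
Arguments approx_set : clear implicits.

Lemma approx_set_measurable N k : measurable (approx_set N k).
Proof.
rewrite /approx_set; case: ifPn => _; last exact: emeasurable_fun_c_infty.
rewrite /dyadic_approx; case: ifPn => // _; rewrite -preimage_comp.
by apply: mphiE => //; apply/measurable_image_EFin; exact: measurable_itv.
Qed.

Lemma approxR_sum_indic N y :
  approxR N y = \sum_k approx_coef N k * \1_(approx_set N k) y.
Proof.
rewrite big_ord_recr /= /approx_coef /approx_set ltnn; congr (_ + _).
by apply: eq_bigr => k _; rewrite /= ltn_ord.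
Qed.

Lemma approxR_ge0 N y : 0 <= approxR N y.
Proof.
rewrite approxR_sum_indic; apply: sumr_ge0 => k _; apply: mulr_ge0.
  by rewrite /approx_coef; case: ifPn.
by rewrite indicE.
Qed.

Lemma approxR_nondecreasing y :
  {homo (fun N => approxR N y) : m N / (m <= N)%N >-> m <= N}.
Proof. by move=> m N mN; exact/lefP/nd_approx. Qed.

Lemma cvg_approxR y : (fun N => approxR N y) @ \oo --> phi y.
Proof.
exact: (@cvg_approx _ _ _ setT (EFin \o phi) y (fun x _ => phi0 x) Logic.I (ltry _)).
Qed.

Lemma measurable_approxR N : measurable_fun setT (approxR N).
Proof.
rewrite (_ : approxR N = fun y => \sum_k approx_coef N k * \1_(approx_set N k) y).
  apply: measurable_sum => k; apply: measurable_funM => //.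
  by apply: measurable_indic; exact: approx_set_measurable.
by apply/funext => y; rewrite approxR_sum_indic.
Qed.

End dyadic_approximation.

Arguments approx_coef {R} N k.
Arguments approx_set {R} phi N k.
Arguments approx_set_measurable {R phi} mphi N k.

Section independence.
Context {d : measure_display} {T : measurableType d} {R : realType}
  (P : probability T R) {n : nat} (e : 'I_n -> T -> R)
  (e_indep : mutually_independent P e)
  (me : forall i, measurable_fun setT (e i)).

Let measurable_preimage i (S : set R) : measurable S -> measurable (e i @^-1` S).
Proof. by move=> mS; rewrite -[_ @^-1` _]setTI; exact: me. Qed.

Lemma prod_indic_preimage (A : 'I_n -> set R) t :
  \prod_i \1_(A i) (e i t) = \1_(\bigcap_(i in [set: 'I_n]) (e i @^-1` A i)) t :> R.
Proof.
have [allA|/existsNP[i0 notA]] := pselect (forall i, A i (e i t)).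
  rewrite indicE mem_set; last by move=> i _; exact: allA.
  by rewrite big1// => i _; rewrite indicE mem_set.
rewrite (bigD1 i0)//= indicE memNset// mul0r indicE memNset//.
by move=> /(_ i0 Logic.I).
Qed.

Lemma Ex_simple_comp i (K : nat) (c : 'I_K -> R) (S : 'I_K -> set R) :
  (forall k, measurable (S k)) ->
  (fun t => \sum_k c k * \1_(S k) (e i t)) \in Lfun P 1 /\
  Ex P (fun t => \sum_k c k * \1_(S k) (e i t)) =
  \sum_k c k * fine (P (e i @^-1` S k)).
Proof.
move=> mS; have mSi k := measurable_preimage i (mS k).
have -> : (fun t => \sum_k c k * \1_(S k) (e i t)) =
    (fun t => \sum_k c k * \1_(e i @^-1` S k) t).
  by apply/funext => t; apply: eq_bigr => k _; rewrite !indicE.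
have L1 k : (fun t => c k * \1_(e i @^-1` S k) t) \in Lfun P 1.
  by apply: LfunZ => //; exact: Lfun1_indic.
split; first exact: Lfun_sum.
by rewrite Ex_sum//; apply: eq_bigr => k _; rewrite ExZ ?Ex_indic ?Lfun1_indic.
Qed.

Lemma Ex_prod_simple (K : nat) (c : 'I_n -> 'I_K -> R) (S : 'I_n -> 'I_K -> set R) :
  (forall i k, measurable (S i k)) ->
  (fun t => \prod_i \sum_k c i k * \1_(S i k) (e i t)) \in Lfun P 1 /\
  Ex P (fun t => \prod_i \sum_k c i k * \1_(S i k) (e i t)) =
  \prod_i \sum_k c i k * fine (P (e i @^-1` S i k)).
Proof.
move=> mS.
pose A (f : {ffun 'I_n -> 'I_K}) := \bigcap_(i in [set: 'I_n]) (e i @^-1` S i (f i)).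
have mA f : measurable (A f).
  by apply: fin_bigcap_measurable => // i _; exact: measurable_preimage.
have L1 (f : {ffun 'I_n -> 'I_K}) :
    (fun t => (\prod_i c i (f i)) * \1_(A f) t) \in Lfun P 1.
  by apply: LfunZ => //; exact: Lfun1_indic.
have -> : (fun t => \prod_i \sum_k c i k * \1_(S i k) (e i t)) =
    (fun t => \sum_(f : {ffun 'I_n -> 'I_K}) (\prod_i c i (f i)) * \1_(A f) t).
  apply/funext => t; rewrite bigA_distr_bigA; apply: eq_bigr => f _.
  by rewrite big_split /= prod_indic_preimage.
split; first exact: Lfun_sum.
rewrite Ex_sum// bigA_distr_bigA; apply: eq_bigr => f _.
rewrite ExZ ?Ex_indic ?Lfun1_indic// e_indep; last by move=> i; exact: mS.
rewrite big_split /=; congr (_ * _).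
rewrite (eq_bigr (fun i => (fine (P (e i @^-1` S i (f i))))%:E)) ?prodEFin//.
by move=> i _; rewrite fineK// fin_num_measure//; exact: measurable_preimage.
Qed.

Lemma Ex_prod_ge0 (phi : 'I_n -> R -> R) :
  (forall i, measurable_fun setT (phi i)) -> (forall i y, 0 <= phi i y) ->
  (forall i, (fun t => phi i (e i t)) \in Lfun P 1) ->
  ('E_P[fun t => (\prod_i phi i (e i t))%R] =
   (\prod_i Ex P (fun t => phi i (e i t)))%:E)%E.
Proof.
move=> mphi phi0 phiL1.
pose g N t := \prod_i approxR (phi i) N (e i t).
have approx_simple i N := Ex_simple_comp i (approx_coef N)
  (approx_set_measurable (mphi i) N).
have g_simple N := Ex_prod_simple (fun i => approx_coef N)
  (fun i => approx_set_measurable (mphi i) N).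
have approxE i N : (fun t => approxR (phi i) N (e i t)) =
    (fun t => \sum_k approx_coef N k * \1_(approx_set (phi i) N k) (e i t)).
  by apply/funext => t; rewrite approxR_sum_indic.
have gE N : g N = fun t =>
    \prod_i \sum_k approx_coef N k * \1_(approx_set (phi i) N k) (e i t).
  by apply/funext => t; apply: eq_bigr => i _; rewrite approxR_sum_indic.
have Ex_g N :
    'E_P[g N]%E = (\prod_i Ex P (fun t => approxR (phi i) N (e i t)))%:E.
  rewrite gE expectationEx ?(g_simple N).1// (g_simple N).2.
  by congr EFin; apply: eq_bigr => i _; rewrite approxE (approx_simple i N).2.
have cvg_factor i : (fun N => Ex P (fun t => approxR (phi i) N (e i t))) @ \oo -->
    Ex P (fun t => phi i (e i t)).
  have := cvg_expectation_nondecreasing (P := P)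
    (h := fun N t => approxR (phi i) N (e i t)) (f := fun t => phi i (e i t)).
  rewrite (expectationEx (phiL1 i)) => /(_ _ _ _ _)/fine_cvgP[]; last by move=> _; exact.
  - by move=> N; apply: measurableT_comp (me i); exact: measurable_approxR.
  - by move=> N t; exact: approxR_ge0.
  - by move=> t; exact: approxR_nondecreasing.
  - by move=> t; exact: cvg_approxR.
have cvg_prod : (fun N => \prod_i Ex P (fun t => approxR (phi i) N (e i t))) @ \oo
    --> \prod_i Ex P (fun t => phi i (e i t)).
  by apply: cvg_big => [|i _]; [exact: mul_continuous | exact: cvg_factor].
have cvg_Eg : ('E_P[g N] @[N --> \oo] -->
    (\prod_i Ex P (fun t => phi i (e i t)))%:E)%E.
  by under eq_fun do rewrite Ex_g; apply/fine_cvgP; split => //; exact: nearW.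
suff cvg_E : ('E_P[g N] @[N --> \oo] -->
    'E_P[fun t => (\prod_i phi i (e i t))%R])%E by exact: cvg_unique cvg_E cvg_Eg.
apply: cvg_expectation_nondecreasing.
- by move=> N; rewrite gE; exact: Lfun_measurable (g_simple N).1.
- by move=> N t; apply: prodr_ge0 => i _; exact: approxR_ge0.
- move=> t m N mN; apply: ler_prod => i _.
  by rewrite approxR_ge0 /=; exact: approxR_nondecreasing.
- by move=> t; apply: cvg_big => [|i _]; [exact: mul_continuous | exact: cvg_approxR].
Qed.


Lemma Ex_prod (phi : 'I_n -> R -> R) :
  (forall i, measurable_fun setT (phi i)) ->
  (forall i, (fun t => phi i (e i t)) \in Lfun P 1) ->
  (fun t => \prod_i phi i (e i t)) \in Lfun P 1 /\
  Ex P (fun t => \prod_i phi i (e i t)) = \prod_i Ex P (fun t => phi i (e i t)).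
Proof.
move=> mphi phiL1.
pose sgn (b : bool) : R := (-1) ^+ (~~ b).
pose part (b : bool) i y := Num.max (sgn b * phi i y) 0.
have m_part b i : measurable_fun setT (part b i).
  apply: measurable_maxr => //; apply: measurable_funM => //.
have part_ge0 b i y : 0 <= part b i y by rewrite /part le_max lexx orbT.
have part_L1 b i : (fun t => part b i (e i t)) \in Lfun P 1.
  apply: (Lfun1_dominated (g := fun t => `|phi i (e i t)|)).
  - exact: measurableT_comp (m_part b i) (me i).
  - move=> t; rewrite ger0_norm // ge_max normr_ge0 andbT.
    by rewrite (le_trans (ler_norm _))// normrM /sgn normrX normrN1 expr1n mul1r.
  - exact: Lfun_norm (phiL1 i).
have phiE i y : phi i y = \sum_(b : bool) sgn b * part b i y.
  rewrite big_bool /part /sgn /= expr0 expr1 !mul1r mulN1r.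
  by case: ger0P => hx; case: ger0P => hnx; lra.
have prod_part (b : {ffun 'I_n -> bool}) :
    (fun t => \prod_i part (b i) i (e i t)) \in Lfun P 1 /\
    Ex P (fun t => \prod_i part (b i) i (e i t)) =
    \prod_i Ex P (fun t => part (b i) i (e i t)).
  have := Ex_prod_ge0 (fun i => m_part (b i) i)
    (fun i => part_ge0 _ i) (fun i => part_L1 _ i).
  move=> E; split; last by rewrite /Ex E.
  apply: ge0_Lfun1 E => //; last by move=> t; exact: prodr_ge0.
  by apply: measurable_prod => i _; exact: measurableT_comp (m_part _ i) (me i).
have -> : (fun t => \prod_i phi i (e i t)) = (fun t =>
    \sum_(b : {ffun 'I_n -> bool}) (\prod_i sgn (b i)) * \prod_i part (b i) i (e i t)).
  apply/funext => t; under eq_bigr do rewrite phiE.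
  by rewrite bigA_distr_bigA; apply: eq_bigr => b _; rewrite -big_split.
split; first by apply: Lfun_sum => // b; apply: LfunZ => //; exact: (prod_part b).1.
rewrite Ex_sum => [|b]; last by apply: LfunZ => //; exact: (prod_part b).1.
have Ex_phi i : Ex P (fun t => phi i (e i t)) =
    \sum_(b : bool) sgn b * Ex P (fun t => part b i (e i t)).
  rewrite [LHS](_ : _ = Ex P (fun t => \sum_b sgn b * part b i (e i t))).
    by rewrite Ex_sum => [|b]; [apply: eq_bigr => b _; rewrite ExZ | apply: LfunZ].
  by congr Ex; apply/funext => t; rewrite phiE.
under [RHS]eq_bigr do rewrite Ex_phi.
rewrite bigA_distr_bigA; apply: eq_bigr => b _.
by rewrite ExZ ?(prod_part b).1// (prod_part b).2 -big_split.
Qed.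

Lemma prod_exprn_pred1 (x : 'I_n -> R) (j : 'I_n) : \prod_i x i ^+ (i == j) = x j.
Proof.
rewrite (bigD1 j)//= eqxx expr1 big1 ?mulr1// => i /negPf ->.
by rewrite expr0.
Qed.

Lemma Ex_prod_exprn (c : 'I_n -> nat) : (forall i, e i \in Lfun P 4%:E) ->
  (forall i, c i <= 4)%N ->
  Ex P (fun t => \prod_i e i t ^+ c i) = \prod_i Ex P (fun t => e i t ^+ c i).
Proof.
move=> eL4 c_le4.
exact: (Ex_prod (fun i => measurable_funX (c i) (@measurable_id _ R setT))
  (fun i => Lfun4_exprn (c_le4 i) (eL4 i))).2.
Qed.

Lemma Ex_mul3 : (forall i, e i \in Lfun P 4%:E) ->
  (forall i, 'E_P[e i] = 0)%E -> forall j l m : 'I_n,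
  Ex P (fun t => e j t * e l t * e m t) =
  if (j == l) && (l == m) then Ex P (fun t => e j t ^+ 3) else 0.
Proof.
move=> eL4 e_centred j l m.
case: ifP => [/andP[/eqP <- /eqP <-] | not_diag].
  by congr Ex; apply/funext => t; rewrite !exprS expr0 mulr1 mulrA.
pose c i := ((i == j) + (i == l) + (i == m))%N.
have -> : (fun t => e j t * e l t * e m t) = (fun t => \prod_i e i t ^+ c i).
  apply/funext => t; under eq_bigr do rewrite !exprD.
  by rewrite !big_split /= !prod_exprn_pred1.
rewrite Ex_prod_exprn => // [|i]; last first.
  by rewrite /c; case: (i == j); case: (i == l); case: (i == m).
have [a ca1] : exists a, c a = 1%N.
  exists (if j == l then m else if j == m then l else j); rewrite /c.
  move: not_diag; have [<-|jl] := eqVneq j l; have [<-|jm] := eqVneq j m;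
    rewrite ?eqxx //=.
  - by rewrite eq_sym (negPf jl).
  - by rewrite (negPf jl) (negPf jm).
rewrite (bigD1 a)//= ca1.
under eq_fun do rewrite expr1.
by rewrite /Ex e_centred mul0r.
Qed.

End independence.

Lemma quadratic_descent {R : realFieldType} (v c : R) : 0 <= v -> c != 0 ->
  exists a : R, a ^+ 2 * v + 2 * (a * c) < 0.
Proof.
move=> v0 c0; have w0 : 0 < v + 1 by lra.
exists (- (c / (v + 1))); set b := c / (v + 1).
have cE : c = b * (v + 1) by rewrite /b divfK ?gt_eqF.
have b2 : 0 < b ^+ 2.
  by rewrite exprn_even_gt0//; apply: contraNneq c0 => b0; rewrite cE b0 mul0r.
rewrite cE; nra.
Qed.

Lemma variance_reduction {d : measure_display} {T : measurableType d}
    {R : realType} (P : probability T R) (U V : T -> R) :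
  U \in Lfun P 2%:E -> V \in Lfun P 2%:E -> covariance P U V != 0%E ->
  exists a : R, ('V_P[(U \+ a \o* V)%R] < 'V_P[U])%E.
Proof.
move=> U2 V2 cov0.
have U1 := Lfun2_Lfun1 U2; have V1 := Lfun2_Lfun1 V2.
have UV1 := Lfun2_mul_Lfun1 U2 V2.
have covf := covariance_fin_num U1 V1 UV1.
have [a lt0] : exists a : R,
    a ^+ 2 * fine 'V_P[V] + 2 * (a * fine (covariance P U V)) < 0.
  apply: quadratic_descent; first by rewrite fine_ge0// variance_ge0.
  by apply: contra cov0 => /eqP c0; rewrite -(fineK covf) c0.
exists a; rewrite varianceD ?Lfun_scale ?ler1n// varianceZ// covarianceZr//.
rewrite -(fineK (variance_fin_num U2)) -(fineK (variance_fin_num V2)) -(fineK covf).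
by rewrite -!EFinM -!EFinD lte_fin -addrA gtrDl.
Qed.

Lemma mxquadE {R : comPzRingType} {n : nat} (v : 'cV[R]_n) (A : 'M[R]_n) :
  (v^T *m A *m v) 0 0 = \sum_l \sum_m A l m * (v l 0 * v m 0).
Proof.
rewrite mxE exchange_big /=; apply: eq_bigr => m _.
rewrite mxE mulr_suml; apply: eq_bigr => l _.
by rewrite !mxE; ring.
Qed.

Lemma lincombE {R : realType} {k : nat} (c v : 'cV[R]_k) :
  lincomb c v = \sum_i c i 0 * v i 0.
Proof. by rewrite /lincomb mxE; apply: eq_bigr => i _; rewrite mxE. Qed.

Lemma unitmx_trmx_mul {R : realFieldType} {n k : nat} (X : 'M[R]_(n, k)) :
  \rank X = k -> X^T *m X \in unitmx.
Proof.
move=> rX; rewrite -row_free_unit; apply: inj_row_free => v vXX0.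
have freeXt : row_free X^T by rewrite /row_free mxrank_tr rX.
apply/eqP; rewrite -(mulmx_free_eq0 _ freeXt); apply/eqP.
set w := v *m X^T.
have ww0 : \sum_i w 0 i ^+ 2 = 0.
  have wwT0 : (w *m w^T) 0 0 = 0.
    by rewrite /w trmx_mul trmxK mulmxA -(mulmxA v) vXX0 mul0mx mxE.
  rewrite -[RHS]wwT0 [RHS]mxE; apply: eq_bigr => i _.
  by rewrite [w^T i 0]mxE expr2.
apply/rowP => j; rewrite [RHS]mxE.
move/psumr_eq0P: ww0 => /(_ (fun i _ => sqr_ge0 _)) /(_ j isT) /eqP.
by rewrite sqrf_eq0 => /eqP.
Qed.

Lemma sum3_diag {R : pzSemiRingType} {n : nat} (a : 'I_n -> 'I_n -> 'I_n -> R)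
    (x : 'I_n -> R) :
  \sum_j \sum_l \sum_m a j l m * (if (j == l) && (l == m) then x j else 0) =
  \sum_j a j j j * x j.
Proof.
apply: eq_bigr => j _; rewrite (bigD1 j)//= [X in _ + X]big1 ?addr0 => [|l lj].
  rewrite (bigD1 j)//= eqxx [X in _ + X]big1 ?addr0// => m /negPf mj.
  by rewrite eq_sym mj mulr0.
by rewrite big1// => m _; rewrite eq_sym (negPf lj) mulr0.
Qed.

Section linear_model.
Context {R : realType} {n k : nat} (X : 'M[R]_(n, k)) (H : 'I_k -> 'M[R]_n).
Context {d : measure_display} {T : measurableType d} (P : probability T R).
Context (beta : 'cV[R]_k) (e : 'I_n -> T -> R).

Definition obs (l : 'I_n) (t : T) : R := Yobs X beta e t l 0.

Local Notation u l := ((X *m beta) l 0).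

Lemma obsE l t : obs l t = u l + e l t.
Proof. by rewrite /obs /Yobs /errvec mxE [in X in _ + X]mxE. Qed.

Lemma Qvec_entry t i : Qvec X H beta e t i 0 =
  \sum_l \sum_m H i l m * (obs l t * obs m t).
Proof. by rewrite /Qvec mxE mxquadE. Qed.

Lemma betaOLS_entry t i :
  betaOLS X beta e t i 0 = \sum_j (invmx (X^T *m X) *m X^T) i j * obs j t.
Proof. by rewrite /betaOLS mxE. Qed.

Lemma lincomb_Qvec (c : 'cV[R]_k) t : lincomb c (Qvec X H beta e t) =
  \sum_l \sum_m (\sum_i c i 0 * H i l m) * (obs l t * obs m t).
Proof.
rewrite lincombE; under eq_bigr do rewrite Qvec_entry mulr_sumr.
rewrite exchange_big; apply: eq_bigr => l _ /=.
under eq_bigr do rewrite mulr_sumr.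
rewrite exchange_big; apply: eq_bigr => m _ /=.
by rewrite mulr_suml; apply: eq_bigr => i _; rewrite mulrA.
Qed.

Lemma lincomb_betaOLS (c : 'cV[R]_k) t : lincomb c (betaOLS X beta e t) =
  \sum_j (X *m invmx (X^T *m X) *m c) j 0 * obs j t.
Proof.
have -> : X *m invmx (X^T *m X) *m c = (c^T *m (invmx (X^T *m X) *m X^T))^T.
  by rewrite !trmx_mul trmxK trmx_inv trmx_mul !trmxK.
rewrite /lincomb /betaOLS mulmxA mxE.
by apply: eq_bigr => j _; rewrite [X in _ = X * _]mxE.
Qed.

Section finite_second_moments.
Hypothesis e_F20 : in_F20 P e.

Let e_L2 l : e l \in Lfun P 2%:E. Proof. by case: e_F20. Qed.
Let e_L1 l : e l \in Lfun P 1. Proof. exact: Lfun2_Lfun1. Qed.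
Let Ex_e l : Ex P (e l) = 0. Proof. by case: e_F20 => _ e0 _; rewrite /Ex e0. Qed.

Lemma Lfun2_obs l : obs l \in Lfun P 2%:E.
Proof.
have -> : obs l = (fun t => u l + e l t) by apply/funext => t; rewrite obsE.
by apply: LfunD; rewrite ?lee1n ?Lfun_cst.
Qed.

Lemma Lfun1_obs_mul l m : (fun t => obs l t * obs m t) \in Lfun P 1.
Proof. exact: Lfun2_mul_Lfun1 (Lfun2_obs l) (Lfun2_obs m). Qed.

Lemma Ex_obs l : Ex P (obs l) = u l.
Proof.
have -> : obs l = (fun t => u l + e l t) by apply/funext => t; rewrite obsE.
by rewrite ExD ?Lfun2_Lfun1 ?Lfun_cst// Ex_cst Ex_e addr0.
Qed.

Lemma Ex_obs_mul (s2 : R) :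
  (forall i j, 'E_P[fun t => (e i t * e j t)%R] = (if i == j then s2 else 0)%:E)%E ->
  forall l m, Ex P (fun t => obs l t * obs m t) =
              u l * u m + (if l == m then s2 else 0).
Proof.
move=> cov_e l m.
have -> : (fun t => obs l t * obs m t) = (fun t =>
    u l * u m + (u l * e m t + (u m * e l t + e l t * e m t))).
  by apply/funext => t; rewrite !obsE; ring.
have ee_L1 : (fun t => e l t * e m t) \in Lfun P 1.
  exact: Lfun2_mul_Lfun1 (e_L2 l) (e_L2 m).
rewrite !ExD ?Lfun_cst ?LfunD ?LfunZ// Ex_cst !ExZ// !Ex_e /Ex cov_e /=.
by rewrite !mulr0 !add0r.
Qed.

Lemma Lfun1_Qvec i : (fun t => Qvec X H beta e t i 0) \in Lfun P 1.
Proof.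
under eq_fun do rewrite Qvec_entry.
by do 2 apply: Lfun_sum => // ?; apply: LfunZ => //; exact: Lfun1_obs_mul.
Qed.

Lemma Lfun1_betaOLS i : (fun t => betaOLS X beta e t i 0) \in Lfun P 1.
Proof.
under eq_fun do rewrite betaOLS_entry.
by apply: Lfun_sum => // j; apply: LfunZ => //; exact/Lfun2_Lfun1/Lfun2_obs.
Qed.

Lemma Ex_Qvec : (forall i, \tr (H i) = 0) -> (forall i, X^T *m H i *m X = 0) ->
  forall i, Ex P (fun t => Qvec X H beta e t i 0) = 0.
Proof.
move=> trH0 XHX0 i; have [_ _ [s2 [_ cov_e]]] := e_F20.
under eq_fun do rewrite Qvec_entry.
rewrite Ex_sum => [|l]; last first.
  by apply: Lfun_sum => // m; apply: LfunZ => //; exact: Lfun1_obs_mul.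
rewrite (eq_bigr (fun l => \sum_m H i l m * (u l * u m + (if l == m then s2 else 0)))).
  under eq_bigr do (under eq_bigr do rewrite mulrDr; rewrite big_split /=).
  rewrite big_split /= -mxquadE trmx_mul -!mulmxA (mulmxA (H i)) !(mulmxA X^T) XHX0.
  rewrite mul0mx mulmx0 mxE add0r.
  transitivity (s2 * \tr (H i)); last by rewrite trH0 mulr0.
  rewrite mulr_sumr.
  apply: eq_bigr => l _; rewrite (bigD1 l)//= eqxx big1 ?addr0 1?mulrC// => m.
  by rewrite eq_sym => /negPf ->; rewrite mulr0.
move=> l _; rewrite Ex_sum => [|m]; last by apply: LfunZ => //; exact: Lfun1_obs_mul.
by apply: eq_bigr => m _; rewrite ExZ ?Lfun1_obs_mul// (Ex_obs_mul cov_e).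
Qed.

Lemma Ex_betaOLS : \rank X = k ->
  forall i, Ex P (fun t => betaOLS X beta e t i 0) = beta i 0.
Proof.
move=> rX i; under eq_fun do rewrite betaOLS_entry.
rewrite Ex_sum => [|j]; last by apply: LfunZ => //; exact/Lfun2_Lfun1/Lfun2_obs.
under eq_bigr do rewrite ExZ ?Ex_obs ?Lfun2_Lfun1 ?Lfun2_obs//.
transitivity ((invmx (X^T *m X) *m X^T *m (X *m beta)) i 0).
  by rewrite mxE; apply: eq_bigr.
by rewrite -mulmxA (mulmxA X^T) mulmxA mulVmx ?mul1mx ?unitmx_trmx_mul.
Qed.

Lemma betaAlpha_unbiased : \rank X = k -> (forall i, \tr (H i) = 0) ->
  (forall i, X^T *m H i *m X = 0) ->
  forall alpha i,
  ('E_P[fun t => betaAlpha X H beta e alpha t i ord0] = (beta i ord0)%:E)%E.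
Proof.
move=> rX trH0 XHX0 alpha i.
have -> : (fun t => betaAlpha X H beta e alpha t i 0) =
    (fun t => betaOLS X beta e t i 0 + alpha * Qvec X H beta e t i 0).
  by apply/funext => t; rewrite /betaAlpha !mxE.
have aQ_L1 := LfunZ (lexx _) alpha (Lfun1_Qvec i).
rewrite expectationEx ?LfunD ?Lfun1_betaOLS// ExD ?Lfun1_betaOLS// ExZ ?Lfun1_Qvec//.
by rewrite Ex_betaOLS// Ex_Qvec// mulr0 addr0.
Qed.

Section finite_fourth_moments.
Hypothesis Y_L4 : fourth_moments X P beta e.

Lemma Lfun2_lincomb_betaOLS (c : 'cV[R]_k) :
  (fun t => lincomb c (betaOLS X beta e t)) \in Lfun P 2%:E.
Proof.
under eq_fun do rewrite lincomb_betaOLS.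
by apply: Lfun_sum => [|j]; rewrite ?lee1n//; apply: LfunZ; rewrite ?lee1n ?Lfun2_obs.
Qed.

Lemma Lfun2_lincomb_Qvec (c : 'cV[R]_k) :
  (fun t => lincomb c (Qvec X H beta e t)) \in Lfun P 2%:E.
Proof.
under eq_fun do rewrite lincomb_Qvec.
apply: Lfun_sum => [|l]; first by rewrite lee1n.
apply: Lfun_sum => [|m]; first by rewrite lee1n.
by apply: LfunZ; [rewrite lee1n | exact: Lfun4_mul (Y_L4 l) (Y_L4 m)].
Qed.

Lemma betaAlpha_variance_lt (c : 'cV[R]_k) :
  covariance P (fun t => lincomb c (betaOLS X beta e t))
               (fun t => lincomb c (Qvec X H beta e t)) != 0%E ->
  exists alpha : R,
    ('V_P[fun t => lincomb c (betaAlpha X H beta e alpha t)] <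
     'V_P[fun t => lincomb c (betaOLS X beta e t)])%E.
Proof.
move=> cov0; have [a lt_a] := variance_reduction (Lfun2_lincomb_betaOLS c)
  (Lfun2_lincomb_Qvec c) cov0.
exists a; have -> : (fun t => lincomb c (betaAlpha X H beta e a t)) =
    ((fun t => lincomb c (betaOLS X beta e t)) \+
     a \o* (fun t => lincomb c (Qvec X H beta e t)))%R.
  apply/funext => t /=.
  rewrite /betaAlpha /lincomb mulmxDr -scalemxAr [LHS]mxE.
  by congr (_ + _); rewrite [LHS]mxE mulrC.
exact: lt_a.
Qed.

Section centred_observations.
Hypothesis beta0 : beta = 0.

Let obs_e l : obs l = e l.
Proof. by apply/funext => t; rewrite obsE beta0 mulmx0 mxE add0r. Qed.

Let e_L4 l : e l \in Lfun P 4%:E.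
Proof. by rewrite -obs_e; exact: Y_L4. Qed.

Let e_mul3_L1 j l m : (fun t => e j t * e l t * e m t) \in Lfun P 1.
Proof. exact: Lfun4_mul3. Qed.

Lemma covariance_betaOLS_Qvec_Ex (c : 'cV[R]_k) :
  covariance P (fun t => lincomb c (betaOLS X beta e t))
               (fun t => lincomb c (Qvec X H beta e t)) =
  (\sum_j \sum_l \sum_m ((X *m invmx (X^T *m X) *m c) j 0 * \sum_i c i 0 * H i l m) *
     Ex P (fun t => e j t * e l t * e m t))%:E.
Proof.
set dv := X *m invmx (X^T *m X) *m c.
set U := fun t => lincomb c (betaOLS X beta e t).
set V := fun t => lincomb c (Qvec X H beta e t).
have U2 : U \in Lfun P 2%:E := Lfun2_lincomb_betaOLS c.
have V2 : V \in Lfun P 2%:E := Lfun2_lincomb_Qvec c.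
have UE : U = fun t => \sum_j dv j 0 * e j t.
  by apply/funext => t; rewrite /U lincomb_betaOLS; under eq_bigr do rewrite obs_e.
have VE : V = fun t => \sum_l \sum_m (\sum_i c i 0 * H i l m) * (e l t * e m t).
  apply/funext => t; rewrite /V lincomb_Qvec.
  by under eq_bigr do under eq_bigr do rewrite !obs_e.
have ExU : Ex P U = 0.
  rewrite UE Ex_sum => [|j]; last exact: LfunZ.
  by rewrite big1// => j _; rewrite ExZ// Ex_e mulr0.
rewrite covarianceE ?(Lfun2_Lfun1 U2) ?(Lfun2_Lfun1 V2) ?(Lfun2_mul_Lfun1 U2 V2)//.
rewrite (expectationEx (Lfun2_Lfun1 U2)) ExU mul0e sube0.
rewrite expectationEx; last exact: Lfun2_mul_Lfun1.
congr EFin.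
have -> : (U * V)%R = fun t => \sum_j \sum_l \sum_m
    (dv j 0 * \sum_i c i 0 * H i l m) * (e j t * e l t * e m t).
  apply/funext => t; rewrite (_ : (U * V)%R t = U t * V t)// UE VE mulr_suml.
  apply: eq_bigr => j _.
  rewrite mulr_sumr; apply: eq_bigr => l _; rewrite mulr_sumr; apply: eq_bigr => m _.
  by rewrite -!mulrA; congr (_ * _); rewrite mulrCA !mulrA.
rewrite Ex_sum => [|j]; last by do 2 apply: Lfun_sum => // ?; exact: LfunZ.
apply: eq_bigr => j _; rewrite Ex_sum => [|l]; last first.
  by apply: Lfun_sum => // m; exact: LfunZ.
apply: eq_bigr => l _; rewrite Ex_sum => [|m]; last exact: LfunZ.
by apply: eq_bigr => m _; rewrite ExZ ?e_mul3_L1.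
Qed.

Lemma covariance_betaOLS_Qvec (c : 'cV[R]_k) :
  covariance P (fun t => lincomb c (betaOLS X beta e t))
               (fun t => lincomb c (Qvec X H beta e t)) =
  (\sum_(j < n) \sum_(l < n) \sum_(m < n)
     ((((X *m invmx (X^T *m X) *m c) j 0 * (\sum_(i < k) c i 0 * H i l m))%R)%:E *
      'E_P[fun t => (e j t * e l t * e m t)%R]))%E.
Proof.
rewrite covariance_betaOLS_Qvec_Ex -sumEFin; apply: eq_bigr => j _.
rewrite -sumEFin; apply: eq_bigr => l _; rewrite -sumEFin; apply: eq_bigr => m _.
by rewrite EFinM expectationEx.
Qed.

Lemma covariance_betaOLS_Qvec_indep (c : 'cV[R]_k) : mutually_independent P e ->
  covariance P (fun t => lincomb c (betaOLS X beta e t))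
               (fun t => lincomb c (Qvec X H beta e t)) =
  (\sum_(j < n)
     ((((X *m invmx (X^T *m X) *m c) j 0 * (\sum_(i < k) c i 0 * H i j j))%R)%:E *
      'E_P[fun t => (e j t ^+ 3)%R]))%E.
Proof.
move=> e_indep; have me i := Lfun_measurable (e_L2 i).
have e_centred i : 'E_P[e i]%E = 0%E by case: e_F20.
rewrite covariance_betaOLS_Qvec_Ex.
under eq_bigr do under eq_bigr do under eq_bigr do
  rewrite (Ex_mul3 e_indep me e_L4 e_centred).
rewrite sum3_diag -sumEFin; apply: eq_bigr => j _.
by rewrite EFinM expectationEx ?Lfun4_exprn.
Qed.

End centred_observations.
End finite_fourth_moments.
End finite_second_moments.
End linear_model.


Theorem lemmaA1 (R : realType) (n k : nat) (X : 'M[R]_(n, k))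
    (H : 'I_k -> 'M[R]_n) :
  (1 <= k)%N -> (k < n)%N -> \rank X = k ->
  (forall i, (H i)^T = H i) ->
  (forall i, \tr (H i) = 0) ->
  (forall i, X^T *m H i *m X = 0) ->
  [/\
   (* (a) unbiasedness *)
   (forall (dd : measure_display) (T : measurableType dd)
      (P : probability T R) (beta : 'cV[R]_k) (e : 'I_n -> T -> R),
      in_F20 P e ->
      forall (alpha : R) (i : 'I_k),
        ('E_P[fun t => betaAlpha X H beta e alpha t i ord0] = (beta i ord0)%:E)%E),
   (* (b) variance reduction *)
   (forall (dd : measure_display) (T : measurableType dd)
      (P : probability T R) (beta : 'cV[R]_k) (e : 'I_n -> T -> R)
      (c : 'cV[R]_k),
      in_F20 P e -> fourth_moments X P beta e ->
      covariance P (fun t => lincomb c (betaOLS X beta e t))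
                   (fun t => lincomb c (Qvec X H beta e t)) != 0%E ->
      exists alpha : R,
        ('V_P[fun t => lincomb c (betaAlpha X H beta e alpha t)] <
         'V_P[fun t => lincomb c (betaOLS X beta e t)])%E),
   (* (c) covariance formula when beta(F) = 0 *)
   (forall (dd : measure_display) (T : measurableType dd)
      (P : probability T R) (beta : 'cV[R]_k) (e : 'I_n -> T -> R)
      (c : 'cV[R]_k),
      in_F20 P e -> fourth_moments X P beta e -> beta = 0 ->
      let dv := X *m invmx (X^T *m X) *m c in
      covariance P (fun t => lincomb c (betaOLS X beta e t))
                   (fun t => lincomb c (Qvec X H beta e t)) =
      (\sum_(j < n) \sum_(l < n) \sum_(m < n)
         (((dv j 0 * (\sum_(i < k) c i 0 * H i l m))%R)%:E *
          'E_P[fun t => (e j t * e l t * e m t)%R]))%E) &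
   (* (d) covariance formula with independent errors and beta(F) = 0 *)
   (forall (dd : measure_display) (T : measurableType dd)
      (P : probability T R) (beta : 'cV[R]_k) (e : 'I_n -> T -> R)
      (c : 'cV[R]_k),
      in_F20 P e -> fourth_moments X P beta e -> beta = 0 ->
      mutually_independent P e ->
      let dv := X *m invmx (X^T *m X) *m c in
      covariance P (fun t => lincomb c (betaOLS X beta e t))
                   (fun t => lincomb c (Qvec X H beta e t)) =
      (\sum_(j < n)
         (((dv j 0 * (\sum_(i < k) c i 0 * H i j j))%R)%:E *
          'E_P[fun t => (e j t ^+ 3)%R]))%E)].
Proof.
move=> _ _ rX _ trH0 XHX0; split.
- by move=> dd T P beta e e_F20; exact: betaAlpha_unbiased.
- by move=> dd T P beta e c e_F20 Y_L4; exact: betaAlpha_variance_lt.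
- by move=> dd T P beta e c e_F20 Y_L4 beta0 dv; exact: covariance_betaOLS_Qvec.
- by move=> dd T P beta e c e_F20 Y_L4 beta0 e_indep dv;
    exact: covariance_betaOLS_Qvec_indep.
Qed.
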